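(* The graph $M_{\rm IV}$ is not word-representable.
   Context: $M_{\rm IV}$ is the split graph with clique $C=\{c_1,\dots,c_6\}$ and independent set $I=\{a_1,a_2,a_3,a_4\}$, where $N(a_1)=\{c_1,c_2\}$, $N(a_2)=\{c_3,c_4\}$, $N(a_3)=\{c_5,c_6\}$, $N(a_4)=\{c_2,c_4,c_6\}$. A graph $G=(V,E)$ is word-representable if there is a word $w$ over $V$ such that for all distinct $a,b\in V$, $ab\in E$ iff $a$ and $b$ alternate in $w$ (i.e. the subsequence of $w$ formed by all occurrences of $a$ and $b$ is $abab\cdots$ or $baba\cdots$). *)

From mathcomp Require Import all_boot.
Set Implicit Arguments. Unset Strict Implicit. Unset Printing Implicit Defensive.

Definition alt_seq (T : Type) (x y : T) (n : nat) : seq T :=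
  mkseq (fun i => if odd i then y else x) n.

Definition alternate (T : eqType) (w : seq T) (a b : T) : bool :=
  let s := filter (fun x => (x == a) || (x == b)) w in
  (s == alt_seq a b (size s)) || (s == alt_seq b a (size s)).

Definition word_representable (V : finType) (E : rel V) : Prop :=
  exists w : seq V, (forall x : V, x \in w) /\
    (forall a b : V, a != b -> E a b = alternate w a b).

(* The graph M_IV on vertex set 'I_10:
   c_1, ..., c_6 are 0, ..., 5 (the clique C),
   a_1, a_2, a_3, a_4 are 6, 7, 8, 9 (the independent set I). *)
Definition MIV_inC (x : nat) : bool := x < 6.

Definition MIV_nbr (a : nat) : seq nat :=
  match a with
  | 6 => [:: 0; 1]
  | 7 => [:: 2; 3]
  | 8 => [:: 4; 5]
  | 9 => [:: 1; 3; 5]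
  | _ => [::]
  end.

Definition MIV_edge_nat (x y : nat) : bool :=
  (x != y) &&
  [|| MIV_inC x && MIV_inC y,
      MIV_inC x && ~~ MIV_inC y && (x \in MIV_nbr y)
    | ~~ MIV_inC x && MIV_inC y && (y \in MIV_nbr x)].

Definition MIV : rel 'I_10 := fun x y => MIV_edge_nat x y.

From mathcomp Require Import all_boot.
Set Implicit Arguments. Unset Strict Implicit. Unset Printing Implicit Defensive.

(* Order the letters of a word by their last occurrences.  If x, y, z, t pairwise
   alternate and come in this cyclic order, no letter alternates with x and z but
   with neither y nor t: within a set of pairwise alternating letters, the letters
   alternating with a given one form an arc of the cyclic order.  This is checked on
   a finite abstraction of words over five letters (letters seen so far, order of
   last occurrences, pairs that already failed to alternate).
   In a word representing M_IV the clique c1..c6 would thus lie on a cycle in which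
   {c1,c2}, {c3,c4}, {c5,c6} and {c2,c4,c6} are arcs; but the middle vertex of the arc
   {c2,c4,c6} has both cycle-neighbours inside it, hence is not next to its partner.
   This last step is checked over all 720 orders of the clique. *)
Section Alternation.
Variable T : eqType.
Implicit Types (w : seq T) (c x y z : T).

Definition alternating w x y : bool :=
  sorted (fun p q => p != q) (filter (pred2 x y) w).

Definition last_before w x y : bool := last x (filter (pred2 x y) w) == y.

Lemma alt_seqS x y n : alt_seq x y n.+1 = x :: alt_seq y x n.
Proof.
rewrite /alt_seq /mkseq /=; congr (_ :: _).
rewrite -[1]addn0 iotaDl -map_comp; apply: eq_map => i /=.
by case: (odd i).
Qed.

Lemma alt_seq_eq (s : seq T) x y : x != y -> all (pred2 x y) s ->
  (s == alt_seq x y (size s)) = sorted (fun p q => p != q) s && (head x s == x).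
Proof.
elim: s x y => [|h s IHs] x y xy /=; first by rewrite eqxx.
case/andP=> h_xy s_xy; rewrite alt_seqS eqseq_cons IHs 1?eq_sym //; last first.
  by apply: sub_all s_xy => e /=; rewrite orbC.
case: s s_xy {IHs} => [|h' s] /=; first by rewrite eqxx andbT.
case/andP=> h'_xy _; case: (eqVneq h x) => [->|] /=; last by rewrite !andbF.
rewrite andbT; case: (path _ _ _); rewrite ?andbF ?andbT //.
by case/orP: h'_xy => /eqP->; rewrite eqxx ?(negbTE xy).
Qed.

Lemma alternateE w x y : x != y -> alternate w x y = alternating w x y.
Proof.
move=> xy; rewrite /alternate /alternating -/(pred2 x y).
have s_xy : all (pred2 x y) (filter (pred2 x y) w) by apply: filter_all.
have s_yx : all (pred2 y x) (filter (pred2 x y) w).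
  by apply: sub_all s_xy => e /=; rewrite orbC.
rewrite alt_seq_eq // alt_seq_eq 1?eq_sym //.
move: s_xy; case: (filter _ _) => [|h s] /=; first by rewrite !eqxx.
case/andP=> /orP[]/eqP-> _; rewrite eqxx ?andbT.
all: by case: (path _ _ _); rewrite ?orbT.
Qed.

Lemma last_before_rcons w c x y :
  last_before (rcons w c) x y =
    if c == y then true else if c == x then false else last_before w x y.
Proof.
rewrite /last_before filter_rcons /=.
case: (eqVneq c y) => [->|cy]; first by rewrite orbT last_rcons eqxx.
by case: (eqVneq c x) cy => [->|_] cy /=; rewrite ?last_rcons ?(negbTE cy).
Qed.

Lemma alternating_rcons w c x y : x != y ->
  alternating (rcons w c) x y =
    alternating w x y && ~~ ((c == x) && last_before w y x || (c == y) && last_before w x y).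
Proof.
move=> xy; rewrite /alternating /last_before.
rewrite (@eq_filter _ (pred2 y x) (pred2 x y)); last by move=> e /=; rewrite orbC.
rewrite filter_rcons /=.
case: (eqVneq c x) => [->|cx] /=.
  rewrite (negbTE xy) orbF; case: (filter _ _) => [|h s] /=.
    by rewrite eq_sym xy.
  by rewrite rcons_path.
case: (eqVneq c y) => [->|cy] /=; last by rewrite andbT.
by case: (filter _ _) => [|h s] /=; rewrite ?rcons_path ?xy.
Qed.

Lemma last_before_trans w : transitive (last_before w).
Proof.
move=> y x z; elim/last_ind: w => [|w c IHw].
  by rewrite /last_before /= => /eqP-> /eqP->.
rewrite !last_before_rcons.
by case: (eqVneq c z) => //; case: (eqVneq c y) => //; case: (eqVneq c x).
Qed.

Lemma last_before_total w x y : x \in w -> last_before w x y || last_before w y x.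
Proof.
elim/last_ind: w => [|w c IHw] //; rewrite mem_rcons inE !last_before_rcons.
by case: (eqVneq c y) => //; case: (eqVneq c x) => //= _ _ /IHw.
Qed.

End Alternation.

Section LetterMap.
Variables (T U : eqType) (f : T -> U) (x y : T).
Hypotheses (fx : {mono f : e / e == x >-> e == f x})
           (fy : {mono f : e / e == y >-> e == f y}).

Lemma filter_pred2_map (w : seq T) :
  filter (pred2 (f x) (f y)) (map f w) = map f (filter (pred2 x y) w).
Proof. by rewrite filter_map; congr map; apply: eq_filter => e /=; rewrite fx fy. Qed.

Lemma alternating_map (w : seq T) : alternating (map f w) (f x) (f y) = alternating w x y.
Proof.
rewrite /alternating filter_pred2_map.
have: all (pred2 x y) (filter (pred2 x y) w) by apply: filter_all.
case: (filter _ _) => //= h s; apply: mono_path_in => p q.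
by rewrite !inE => /orP[]/eqP-> /orP[]/eqP->; rewrite ?fx ?fy // eq_sym ?fx ?fy eq_sym.
Qed.

Lemma last_before_map (w : seq T) : last_before (map f w) (f x) (f y) = last_before w x y.
Proof. by rewrite /last_before filter_pred2_map last_map fy. Qed.

End LetterMap.

Definition cyclic4 (T : Type) (R : rel T) (x y z t : T) : bool :=
  [|| R x y && R y z && R z t, R y z && R z t && R t x,
      R z t && R t x && R x y | R t x && R x y && R y z].

(* The letters a, x, y, z, t are coded 0, ..., 4 and every other letter is coded 5. *)
Definition letters : seq nat := iota 0 5.

Definition table (f : nat -> nat -> bool) : seq (seq bool) :=
  [seq [seq f i j | j <- letters] | i <- letters].

Definition entry (M : seq (seq bool)) (i j : nat) : bool := nth false (nth [::] M i) j.

Lemma entry_table f i j : i < 5 -> j < 5 -> entry (table f) i j = f i j.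
Proof. by move=> i5 j5; rewrite /entry !(nth_map 0) ?size_iota // !nth_iota. Qed.

Definition state := (seq bool * seq (seq bool) * seq (seq bool))%type.

Definition abstraction (v : seq nat) : state :=
  ([seq i \in v | i <- letters],
   table (last_before v),
   table (fun i j => (i != j) && ~~ alternating v i j)).

Definition step (st : state) (c : nat) : state :=
  let: (seen, before, broken) := st in
  ([seq nth false seen i || (c == i) | i <- letters],
   table (fun i j => if c == j then true else if c == i then false else entry before i j),
   table (fun i j => (i != j) &&
     [|| entry broken i j, (c == i) && entry before j i | (c == j) && entry before i j])).

Lemma eq_table f g : (forall i j, i < 5 -> j < 5 -> f i j = g i j) -> table f = table g.
Proof.
move=> fg; apply/eq_in_map => i /[!mem_iota] i5; apply/eq_in_map => j /[!mem_iota] j5.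
exact: fg.
Qed.

Lemma abstraction_rcons v c : abstraction (rcons v c) = step (abstraction v) c.
Proof.
rewrite /abstraction /step; congr (_, _, _).
- apply/eq_in_map => i /[!mem_iota] i5.
  by rewrite (nth_map 0) ?size_iota // nth_iota // mem_rcons inE eq_sym orbC.
- by apply: eq_table => i j i5 j5; rewrite entry_table // last_before_rcons.
apply: eq_table => i j i5 j5; rewrite !entry_table //.
by case: (eqVneq i j) => //= ij; rewrite alternating_rcons // negb_and negbK orbA.
Qed.

Definition required : seq (nat * nat) :=
  [:: (1, 2); (1, 3); (1, 4); (2, 3); (2, 4); (3, 4); (0, 1); (0, 3)].

Definition admissible (st : state) : bool :=
  all (fun e => ~~ entry st.2 e.1 e.2) required.

Definition interleaved (st : state) : bool :=
  [&& all id st.1.1, entry st.2 0 2, entry st.2 0 4 & cyclic4 (entry st.1.2) 1 2 3 4].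

Fixpoint explore (fuel : nat) (found frontier : seq state) : seq state :=
  if fuel is fuel'.+1 then
    let new := undup [seq st <- [seq step st c | st <- frontier, c <- iota 0 6] |
                      admissible st && (st \notin found)] in
    explore fuel' (found ++ new) new
  else found.

(* The fuel only bounds the search: soundness rests on [reachable_closed]. *)
Definition reachable : seq state :=
  Eval vm_compute in explore 40 [:: abstraction [::]] [:: abstraction [::]].

Lemma reachable_closed :
  all (fun st => all (fun c => admissible (step st c) ==> (step st c \in reachable))
                     (iota 0 6)) reachable.
Proof. by vm_compute. Qed.

Lemma reachable_not_interleaved : all (fun st => ~~ interleaved st) reachable.
Proof. by vm_compute. Qed.

Lemma empty_reachable : abstraction [::] \in reachable.
Proof. by vm_compute. Qed.

Lemma admissible_abstraction v :
  admissible (abstraction v) = all (fun e => alternating v e.1 e.2) required.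
Proof. by rewrite /admissible /= !entry_table //= !negbK. Qed.

Lemma abstraction_reachable v : all (gtn 6) v ->
  all (fun e => alternating v e.1 e.2) required -> abstraction v \in reachable.
Proof.
elim/last_ind: v => [|v c IHv]; first by rewrite empty_reachable.
rewrite all_rcons => /andP[c6 v6] alt_vc.
have alt_v : all (fun e => alternating v e.1 e.2) required.
  apply/allP => e e_req; have := allP alt_vc e e_req.
  have ij : e.1 != e.2 by move: e e_req; apply/allP.
  by rewrite alternating_rcons // => /andP[].
have /allP/(_ c) := allP reachable_closed _ (IHv v6 alt_v).
by rewrite mem_iota -abstraction_rcons admissible_abstraction alt_vc; apply.
Qed.

Lemma abstraction_not_interleaved v : all (gtn 6) v -> {subset letters <= v} ->
  all (fun e => alternating v e.1 e.2) required ->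
  ~~ alternating v 0 2 -> ~~ alternating v 0 4 -> ~~ cyclic4 (last_before v) 1 2 3 4.
Proof.
move=> v6 v_full alt_v nalt02 nalt04; apply: contraL (abstraction_reachable v6 alt_v).
move=> cyc; apply/negP => /(allP reachable_not_interleaved); apply/negPn.
rewrite /interleaved /= !entry_table //= nalt02 nalt04.
have -> : cyclic4 (entry (table (last_before v))) 1 2 3 4 = cyclic4 (last_before v) 1 2 3 4.
  by rewrite /cyclic4 !entry_table.
by rewrite cyc !v_full.
Qed.

Lemma index_mono (T : eqType) (s : seq T) c :
  c \in s -> {mono index^~ s : e / e == c >-> e == index c s}.
Proof.
move=> c_s e; case: (eqVneq e c) => [->|ec]; first by rewrite eqxx.
apply/negbTE; apply: contra ec => /eqP ec.
have e_s : e \in s by rewrite -index_mem ec index_mem.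
by rewrite -(nth_index c e_s) ec nth_index.
Qed.

Lemma alternation_not_interleaved (T : eqType) (w : seq T) (a x y z t : T) :
  uniq [:: a; x; y; z; t] -> {subset [:: a; x; y; z; t] <= w} ->
  pairwise (alternating w) [:: x; y; z; t] ->
  alternating w a x -> ~~ alternating w a y -> alternating w a z -> ~~ alternating w a t ->
  ~~ cyclic4 (last_before w) x y z t.
Proof.
set s := [:: a; x; y; z; t] => s_uniq s_w pair_alt alt_ax nalt_ay alt_az nalt_at.
set v := map (index^~ s) w.
have index_s i : i < 5 -> index (nth a s i) s = i by move=> i5; rewrite index_uniq.
have mono_s i : i < 5 -> {mono index^~ s : e / e == nth a s i >-> e == index (nth a s i) s}.
  by move=> i5; apply/index_mono/mem_nth.
have alt_v i j : i < 5 -> j < 5 -> alternating v i j = alternating w (nth a s i) (nth a s j).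
  move=> i5 j5; rewrite -{1}(index_s i i5) -{1}(index_s j j5).
  exact: alternating_map (mono_s i i5) (mono_s j j5) w.
have before_v i j : i < 5 -> j < 5 -> last_before v i j = last_before w (nth a s i) (nth a s j).
  move=> i5 j5; rewrite -{1}(index_s i i5) -{1}(index_s j j5).
  exact: last_before_map (mono_s i i5) (mono_s j j5) w.
have <- : cyclic4 (last_before v) 1 2 3 4 = cyclic4 (last_before w) x y z t.
  by rewrite /cyclic4 !before_v.
apply: abstraction_not_interleaved; rewrite ?alt_v //.
- by apply/allP => _ /mapP[e _ ->]; apply: leq_ltn_trans (index_size e s) _.
- move=> i /[!mem_iota] /= i5; apply/mapP; exists (nth a s i); last by rewrite index_s.
  by apply/s_w/mem_nth.
move: pair_alt; rewrite /= !andbT !alt_v //= => /and3P[/and3P[-> -> ->] /andP[-> ->] ->].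
by rewrite alt_ax alt_az.
Qed.

Lemma sorted_cyclic4 (T : eqType) (R : rel T) (p : seq T) (x y z t : T) :
  transitive R -> sorted R p -> {subset [:: x; y; z; t] <= p} ->
  cyclic4 (fun u v => index u p < index v p) x y z t -> cyclic4 R x y z t.
Proof.
move=> R_trans p_sorted sub_p.
have R_ind u v : u \in [:: x; y; z; t] -> v \in [:: x; y; z; t] ->
    index u p < index v p -> R u v.
  by move=> /sub_p u_p /sub_p v_p; apply: sorted_ltn_index.
rewrite /cyclic4 => /or4P[] /andP[/andP[? ?] ?]; apply/or4P;
  [constructor 1 | constructor 2 | constructor 3 | constructor 4];
  by rewrite !R_ind ?inE ?eqxx ?orbT.
Qed.

Fixpoint words (T : Type) (n : nat) (s : seq T) : seq (seq T) :=
  if n is n'.+1 then [seq c :: u | c <- s, u <- words n' s] else [:: [::]].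

Definition interleaving (c : seq nat) : bool :=
  if c is [:: a; x; y; z; t] then
    [&& a < 10, all MIV_inC [:: x; y; z; t], uniq c, pairwise MIV_edge_nat [:: x; y; z; t],
        MIV_edge_nat a x, ~~ MIV_edge_nat a y, MIV_edge_nat a z & ~~ MIV_edge_nat a t]
  else false.

Definition interleavings : seq (seq nat) :=
  [seq c <- [seq a :: u | a <- iota 0 10, u <- words 4 (iota 0 6)] | interleaving c].

Definition cyclic_in (p c : seq nat) : bool :=
  if c is [:: _; x; y; z; t] then cyclic4 (fun u v => index u p < index v p) x y z t
  else false.

Lemma clique_orders_interleaved :
  all (fun p => has (cyclic_in p) interleavings) (permutations (iota 0 6)).
Proof. by vm_compute. Qed.

Lemma MIV_inord u v : u < 10 -> v < 10 -> MIV (inord u) (inord v) = MIV_edge_nat u v.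
Proof. by move=> u10 v10; rewrite /MIV !inordK. Qed.

Section RepresentingWord.
Variable w : seq 'I_10.
Hypotheses (w_full : forall u, u \in w)
           (w_repr : forall u v, u != v -> MIV u v = alternate w u v).

Lemma alternating_inord u v : u < 10 -> v < 10 -> u != v ->
  alternating w (inord u) (inord v) = MIV_edge_nat u v.
Proof.
move=> u10 v10 uv; have iuv : inord u != inord v :> 'I_10.
  by apply: contra uv => /eqP/(congr1 val) /=; rewrite !inordK // => ->.
by rewrite -alternateE // -w_repr // MIV_inord.
Qed.

Lemma interleaving_not_cyclic a x y z t : interleaving [:: a; x; y; z; t] ->
  ~~ cyclic4 (fun u v => last_before w (inord u) (inord v)) x y z t.
Proof.
case/and5P=> a10 /and5P[x6 y6 z6 t6 _] c_uniq pair_edge /and4P[ax nay az nat].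
have lt10 u : u < 6 -> u < 10 by move/leq_trans; apply.
have [x10 y10 z10 t10] := And4 (lt10 x x6) (lt10 y y6) (lt10 z z6) (lt10 t t6).
have a_ne u : u \in [:: x; y; z; t] -> a != u.
  by move=> u_in; apply: contraNneq (andP c_uniq).1 => ->.
have c10 : all (gtn 10) [:: a; x; y; z; t] by rewrite /= a10 x10 y10 z10 t10.
apply: (alternation_not_interleaved (a := inord a)).
- rewrite -[[:: inord a; _; _; _; _]]/(map inord [:: a; x; y; z; t]) map_inj_in_uniq //.
  move=> u v /(allP c10) u10 /(allP c10) v10 /(congr1 val) /=.
  by rewrite !inordK.
- by move=> u _; apply: w_full.
- rewrite -[[:: inord x; _; _; _]]/(map inord [:: x; y; z; t]) pairwise_map.
  apply: (sub_in_pairwise (P := gtn 10) _ _ pair_edge); last by case/andP: c10.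
  by move=> u v u10 v10 uv; rewrite /= alternating_inord //; case/andP: uv.
all: by rewrite alternating_inord ?a_ne ?inE ?eqxx ?orbT.
Qed.

End RepresentingWord.

Theorem lemma12 : ~ word_representable MIV.
Proof.
case=> w [w_full w_repr].
pose R u v := last_before w (inord u : 'I_10) (inord v).
pose p := sort R (iota 0 6).
have R_trans : transitive R by move=> ? ? ?; apply: last_before_trans.
have p_sorted : sorted R p by apply: sort_sorted => u v; apply: last_before_total.
have p_perm : p \in permutations (iota 0 6) by rewrite mem_permutations perm_sort.
have /hasP[[|a [|x [|y [|z [|t [|? ?]]]]]] //] := allP clique_orders_interleaved p p_perm.
rewrite mem_filter => /andP[c_interleaving _] c_cyc.
have /negP := interleaving_not_cyclic w_full w_repr c_interleaving; apply.
case/and3P: c_interleaving => _ /allP clique_c _.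
apply: (sorted_cyclic4 R_trans p_sorted _ c_cyc) => u /clique_c.
by rewrite mem_sort mem_iota.
Qed.
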